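(* Let $0<\beta<1$, $p=\lceil\beta^{-1}\rceil-1$, and let $s,t$ be integers with $2\le t<s\le p+1$. Let $G$ be a graph of order $n$ with minimum degree $(1-\beta)n$. Then for every $S\in\mathcal{K}_s$, $$\sum_{T\in\mathcal{K}_t(S)}D_-(T)\ \ge\ (1-\beta)s\binom{s-2}{t-1}-(t-1)\binom{s-1}{t}+\binom{s-2}{t-2}D_-(S).$$ In particular, for $2\le t\le p$ and $S\in\mathcal{K}_{t+1}$, $\widetilde D(S)\ge 0$, where $\widetilde D(S)=\sum_{T\in\mathcal{K}_t(S)}D_-(T)-\big(2-(t+1)\beta+(t-1)D_-(S)\big)$.
   Context: All graphs are finite and simple. For a graph $G$, $\mathcal{K}_t$ denotes the set of $t$-cliques of $G$ (identified with their vertex sets); for a clique $S$, $\mathcal{K}_t(S)$ is the set of $t$-cliques contained in $S$. The degree $d(T)$ of a $t$-clique $T$ is the number of $(t+1)$-cliques containing $T$, and $D(T)=d(T)/n$ where $n=|V(G)|$. For $0<\beta<1$ with $p=\lceil\beta^{-1}\rceil-1$, and $T\in\mathcal{K}_t$ with $1\le t\le p+1$, define $D_-(T)=\min\{D(T),(p-t+1)\beta\}$. *)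

From HB Require Import structures.
From mathcomp Require Import all_boot all_order all_algebra.
Set Implicit Arguments. Unset Strict Implicit. Unset Printing Implicit Defensive.
Import Order.TTheory GRing.Theory Num.Theory.
Local Open Scope ring_scope.

Section Graphs.
Variable V : finType.
Variable e : rel V.

Definition simple_graph := symmetric e /\ irreflexive e.

Definition is_clique (A : {set V}) : bool :=
  [forall x in A, forall y in A, (x != y) ==> e x y].

Definition Kcl (t : nat) : {set {set V}} :=
  [set A : {set V} | is_clique A && (#|A| == t)%N].

Definition Kcl_in (t : nat) (S : {set V}) : {set {set V}} :=
  [set A in Kcl t | A \subset S].

Definition cdeg (A : {set V}) : nat := #|[set B in Kcl #|A|.+1 | A \subset B]|.

Definition vdeg (v : V) : nat := #|[set w | e v w]|.

Definition Dn {R : numFieldType} (A : {set V}) : R := (cdeg A)%:R / (#|V|)%:R.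

Definition Dminus {R : numFieldType} (p : nat) (beta : R) (A : {set V}) : R :=
  Num.min (Dn A) (((p%:R - (#|A|)%:R + 1) * beta)).

End Graphs.

(* For a vertex w and a clique A let nonadj A w count the vertices of A not
   adjacent to w: w extends A to a larger clique iff nonadj A w = 0, and
   summing nonadj A w over all w gives sum_(x in A) (n - deg x) <= |A| beta n.
   Pointwise inequalities for nonadj then give, for every (t+1)-clique S,
   D(S) >= 1 - |S| beta, D(S - x) <= D(S) + beta and
   sum_x D(S - x) >= 2 - (t+1) beta + (t-1) D(S); since 1 <= (p+1) beta, a
   case split on how many D(S - x) fall below the truncation level (p-t+1) beta
   turns these into the case s = t + 1 for D_-.  The general case follows by
   induction on s - t: double counting the pairs T c U c S with |U| = |T| + 1
   and applying the case s = t + 1 to every U gives a recurrence that the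
   right-hand side satisfies with equality. *)

From HB Require Import structures.
From mathcomp Require Import all_boot all_order all_algebra.
From mathcomp Require Import ring lra zify.
Import Order.TTheory GRing.Theory Num.Theory.
Set Implicit Arguments. Unset Strict Implicit. Unset Printing Implicit Defensive.
Local Open Scope ring_scope.

Lemma cardsD1_succ (T : finType) (S : {set T}) (x : T) (t : nat) :
  x \in S -> #|S| = t.+1 -> #|S :\ x| = t.
Proof. by move=> xS cS; apply/eqP; rewrite -eqSS -cS (cardsD1 x S) xS. Qed.

Lemma card_set_sum (T : finType) (P : pred T) :
  #|[set x | P x]| = (\sum_x (P x : nat))%N.
Proof.
rewrite -sum1_card big_mkcond /=; apply: eq_bigr => x _.
by rewrite inE; case: (P x).
Qed.

Section Cliques.
Variables (V : finType) (e : rel V).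

Lemma is_cliqueP (A : {set V}) :
  reflect (forall x y, x \in A -> y \in A -> x != y -> e x y) (is_clique e A).
Proof.
apply: (iffP forall_inP) => [cl x y xA yA xy | cl x xA].
  by move/forall_inP: (cl x xA) => /(_ y yA) /implyP; apply.
by apply/forall_inP => y yA; apply/implyP; apply: cl.
Qed.

Lemma is_clique_sub (A B : {set V}) :
  A \subset B -> is_clique e B -> is_clique e A.
Proof.
move=> /subsetP AB /is_cliqueP clB; apply/is_cliqueP => x y xA yA.
by apply: clB; apply: AB.
Qed.

Lemma mem_Kcl_in (S T : {set V}) (t : nat) : is_clique e S ->
  (T \in Kcl_in e t S) = (T \subset S) && (#|T| == t).
Proof.
move=> Scl; rewrite !inE andbC; case TS: (T \subset S) => //=.
by rewrite (is_clique_sub TS Scl).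
Qed.

Lemma Kcl_in_id (S : {set V}) : is_clique e S -> Kcl_in e #|S| S = [set S].
Proof.
move=> Scl; apply/setP => T; rewrite (mem_Kcl_in _ _ Scl) inE.
apply/andP/eqP => [[TS /eqP cT]|->]; last by rewrite subxx eqxx.
by apply/eqP; rewrite eqEcard TS cT leqnn.
Qed.

Lemma card_Kcl_in (S : {set V}) (t : nat) :
  is_clique e S -> #|Kcl_in e t S| = 'C(#|S|, t).
Proof.
move=> Scl; rewrite -cards_draws; apply: eq_card => T.
by rewrite (mem_Kcl_in _ _ Scl) inE.
Qed.

Lemma card_supsets_succ (A : {set V}) (Q : pred {set V}) :
  #|[set B : {set V} | [&& A \subset B, #|B| == #|A|.+1 & Q B]]| =
  #|[set w | (w \notin A) && Q (w |: A)]|.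
Proof.
rewrite -[RHS](card_in_imset (f := fun w => w |: A)); last first.
  move=> w1 w2; rewrite !inE => /andP[w1A _] /andP[w2A _] E.
  have : w1 \in w2 |: A by rewrite -E setU11.
  by case/setU1P => // w1inA; rewrite w1inA in w1A.
apply: eq_card => B; rewrite inE; apply/idP/imsetP; last first.
  case=> w; rewrite inE => /andP[wA Qw] ->.
  by rewrite subsetUr cardsU1 wA Qw add1n eqxx.
case/and3P => AB /eqP cB QB.
have /cards1P[w Ew] : #|B :\: A| == 1%N by rewrite cardsD (setIidPr AB) cB subSnn.
have /setDP[wB wA] : w \in B :\: A by rewrite Ew set11.
have EB : B = w |: A.
  rewrite -Ew; apply/setP => x; rewrite !inE.
  by case xA: (x \in A); rewrite /= ?orbT ?orbF ?andbT // (subsetP AB).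
by exists w; rewrite // inE wA -EB.
Qed.

Lemma sum_Kcl_in_setD1 (S : {set V}) (t : nat) (R : nmodType) (f : {set V} -> R) :
  is_clique e S -> #|S| = t.+1 ->
  \sum_(T in Kcl_in e t S) f T = \sum_(x in S) f (S :\ x).
Proof.
move=> Scl cS.
have -> : Kcl_in e t S = (fun x => S :\ x) @: S.
  apply/setP => T; rewrite (mem_Kcl_in _ _ Scl); apply/andP/imsetP.
    case=> TS /eqP cT.
    have /cards1P[x Ex] : #|S :\: T| == 1%N by rewrite cardsD (setIidPr TS) cS cT subSnn.
    have /setDP[xS xT] : x \in S :\: T by rewrite Ex set11.
    exists x => //; apply/eqP; rewrite eqEcard (cardsD1_succ xS cS) cT leqnn andbT.
    apply/subsetP => y yT; rewrite !inE (subsetP TS) // andbT.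
    by apply: contraNneq xT => <-.
  by case=> x xS ->; rewrite subsetDl (cardsD1_succ xS cS) /=.
rewrite big_imset //= => x y xS yS E; apply/eqP; apply/negPn/negP => xy.
have : x \in S :\ y by rewrite !inE xy.
by rewrite -E !inE eqxx.
Qed.

Lemma double_count_Kcl_in (S : {set V}) (t : nat) (R : nmodType) (f : {set V} -> R) :
  is_clique e S ->
  \sum_(U in Kcl_in e t.+1 S) \sum_(T in Kcl_in e t U) f T =
  (\sum_(T in Kcl_in e t S) f T) *+ (#|S| - t).
Proof.
move=> Scl.
have -> : \sum_(U in Kcl_in e t.+1 S) \sum_(T in Kcl_in e t U) f T =
    \sum_(U in Kcl_in e t.+1 S) \sum_(T in Kcl_in e t S | T \subset U) f T.
  apply: eq_bigr => U; rewrite (mem_Kcl_in _ _ Scl) => /andP[US _].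
  apply: eq_bigl => T; rewrite (mem_Kcl_in _ _ (is_clique_sub US Scl)) (mem_Kcl_in _ _ Scl).
  by case TU: (T \subset U); rewrite ?andbF //= ?(subset_trans TU US) ?andbT.
rewrite (exchange_big_dep (fun T => T \in Kcl_in e t S)) /=; last by move=> U T _ /andP[].
rewrite -sumrMnl.
apply: eq_bigr => T; rewrite (mem_Kcl_in _ _ Scl) => /andP[TS /eqP cT].
rewrite sumr_const; congr (_ *+ _).
transitivity #|[set U : {set V} | [&& T \subset U, #|U| == #|T|.+1 & U \subset S]]|.
  apply: eq_card => U; rewrite unfold_in /= (mem_Kcl_in _ _ Scl) inE cT TS eqxx.
  by case: (T \subset U); case: (U \subset S); case: (_ == _).
rewrite card_supsets_succ -cT -[in RHS](setIidPr TS) -cardsD.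
by apply: eq_card => w; rewrite !inE subUset sub1set TS andbT andbC.
Qed.

Lemma is_clique_setD1 (S : {set V}) (x : V) : is_clique e S -> is_clique e (S :\ x).
Proof. exact/is_clique_sub/subsetDl. Qed.

End Cliques.

Section CommonNeighbours.
Variables (V : finType) (e : rel V).
Hypotheses (e_sym : symmetric e) (e_irr : irreflexive e).

Definition nonadj (A : {set V}) (w : V) : nat := #|[set x in A | ~~ e x w]|.

Lemma nonadj_eq0P (A : {set V}) (w : V) :
  reflect (forall x, x \in A -> e x w) (nonadj A w == 0%N).
Proof.
rewrite /nonadj cards_eq0; apply: (iffP eqP) => [A0 x xA | adj].
  by apply/negPn/negP => nxw; move/setP/(_ x): A0; rewrite !inE xA nxw.
by apply/setP => x; rewrite !inE; case xA: (x \in A); rewrite //= adj.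
Qed.

Lemma nonadj_setD1 (S : {set V}) (x w : V) : (nonadj (S :\ x) w <= nonadj S w)%N.
Proof.
by apply: subset_leq_card; apply/subsetP => y; rewrite !inE -andbA => /andP[_ ->].
Qed.

Lemma cdeg_sum_nonadj (A : {set V}) :
  is_clique e A -> cdeg e A = (\sum_w (nonadj A w == 0%N))%N.
Proof.
move=> Acl; rewrite -card_set_sum /cdeg.
have -> : [set B in Kcl e #|A|.+1 | A \subset B] =
   [set B : {set V} | [&& A \subset B, #|B| == #|A|.+1 & is_clique e B]].
  by apply/setP => B; rewrite !inE andbC; case: (A \subset B); rewrite //= andbC.
rewrite card_supsets_succ; apply: eq_card => w; rewrite !inE.
apply/andP/nonadj_eq0P => [[wA /is_cliqueP cl] x xA | adj].
  by apply: cl; rewrite ?setU11 ?setU1r //; apply: contraNneq wA => <-.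
split; first by apply: contraFN (e_irr w) => /adj.
apply/is_cliqueP => x y /setU1P[->|xA] /setU1P[->|yA]; rewrite ?eqxx //.
- by rewrite e_sym adj.
- by move=> _; apply: adj.
- by move/is_cliqueP: Acl; apply.
Qed.

Lemma sub_order_vdeg (x : V) : (#|V| - vdeg e x = \sum_w ~~ e x w)%N.
Proof.
rewrite -card_set_sum /vdeg.
have -> : [set w | ~~ e x w] = ~: [set w | e x w] by apply/setP => w; rewrite !inE.
by rewrite [in RHS]cardsCs setCK.
Qed.

Lemma sum_nonadj (A : {set V}) :
  (\sum_w nonadj A w = \sum_(x in A) (#|V| - vdeg e x))%N.
Proof.
under eq_bigr => w _ do rewrite /nonadj card_set_sum big_mkcond /=.
rewrite exchange_big [RHS]big_mkcond /=; apply: eq_bigr => x _.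
by rewrite sub_order_vdeg; case: (x \in A); rewrite //= big1.
Qed.

Lemma leq_order_cdeg (A : {set V}) : is_clique e A ->
  (#|V| <= cdeg e A + \sum_(x in A) (#|V| - vdeg e x))%N.
Proof.
move=> Acl; rewrite (cdeg_sum_nonadj Acl) -sum_nonadj -big_split /= -sum1_card.
by apply: leq_sum => w _; case: (nonadj A w).
Qed.

Lemma cdeg_setD1 (S : {set V}) (x : V) : is_clique e S ->
  (cdeg e (S :\ x) <= cdeg e S + (#|V| - vdeg e x))%N.
Proof.
move=> Scl; rewrite (cdeg_sum_nonadj Scl) (cdeg_sum_nonadj (is_clique_setD1 x Scl)).
rewrite sub_order_vdeg -big_split /=.
apply: leq_sum => w _; case exw: (e x w); last by rewrite addn1; case: (_ == _).
rewrite addn0; case: nonadj_eq0P => // adj.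
suff -> : nonadj S w == 0%N by [].
apply/nonadj_eq0P => y yS; case: (eqVneq y x) => [->//|yx].
by apply: adj; rewrite !inE yx.
Qed.

(* The vertex [w] extends every [S :\ x] when it misses nothing in [S], and it
   extends exactly one of them when it misses exactly one vertex of [S]. *)
Lemma leq_sum_nonadj_setD1 (S : {set V}) (w : V) : (2 <= #|S|)%N ->
  (2 + (#|S| - 2) * (nonadj S w == 0%N) <=
     \sum_(x in S) (nonadj (S :\ x) w == 0%N) + nonadj S w)%N.
Proof.
move=> S2; case: (posnP (nonadj S w)) => [m0|m_gt0].
  under eq_bigr => x _ do rewrite -leqn0 (leq_trans (nonadj_setD1 S x w)) ?m0 //.
  by rewrite m0 sum1_card muln1 addn0 subnKC.
rewrite muln0 addn0.
case: (ltngtP (nonadj S w) 1) => [|m_gt1|m1]; first by rewrite ltnNge m_gt0.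
  exact: leq_trans m_gt1 (leq_addl _ _).
move/eqP: (m1); case/cards1P => y Ey.
have /setIdP[yS _] : y \in [set x in S | ~~ e x w] by rewrite Ey set11.
rewrite (bigD1 y) //= m1.
suff -> : nonadj (S :\ y) w == 0%N by rewrite addn1 ltnS leq_addr.
apply/nonadj_eq0P => z /setD1P[zy zS]; apply/negPn/negP => nzw.
have : z \in [set x in S | ~~ e x w] by rewrite inE zS nzw.
by rewrite Ey inE (negbTE zy).
Qed.

Lemma sum_cdeg_setD1 (S : {set V}) : is_clique e S -> (2 <= #|S|)%N ->
  (2 * #|V| + (#|S| - 2) * cdeg e S <=
     \sum_(x in S) cdeg e (S :\ x) + \sum_(x in S) (#|V| - vdeg e x))%N.
Proof.
move=> Scl S2; rewrite (cdeg_sum_nonadj Scl) -sum_nonadj.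
rewrite (eq_bigr _ (fun x _ => cdeg_sum_nonadj (is_clique_setD1 x Scl))).
rewrite exchange_big big_distrr /= mulnC -sum_nat_const -!big_split /=.
by apply: leq_sum => w _; apply: leq_sum_nonadj_setD1.
Qed.

End CommonNeighbours.

Lemma sum_min_ge (R : realFieldType) (I : finType) (A : {set I}) (a : I -> R)
    (z c beta : R) (t : nat) :
  #|A| = t.+1 -> (0 < t)%N ->
  2 - t.+1%:R * beta + (t - 1)%:R * z <= \sum_(x in A) a x ->
  (forall x, x \in A -> a x <= z + beta) ->
  (forall x, x \in A -> 1 - t%:R * beta <= a x) ->
  1 - t%:R * beta <= c ->
  2 - t.+1%:R * beta + (t - 1)%:R * Num.min z (c - beta)
    <= \sum_(x in A) Num.min (a x) c.
Proof.
move=> cA t_gt0 sum_ge a_le a_ge c_ge.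
have t1R : t.+1%:R = t%:R + 1 :> R by rewrite -addn1 natrD.
set U := [set x in A | a x < c].
have UA : U \subset A by apply/subsetP => x /setIdP[].
have cAU : #|A :\: U| = (t.+1 - #|U|)%N by rewrite cardsD (setIidPr UA) cA.
have minU : \sum_(x in U) Num.min (a x) c = \sum_(x in U) a x.
  by apply: eq_bigr => x /setIdP[_ /ltW]; apply: min_l.
have minAU : \sum_(x in A :\: U) Num.min (a x) c = c *+ #|A :\: U|.
  rewrite -sumr_const; apply: eq_bigr => x /setDP[xA].
  by rewrite inE xA /= -leNgt; apply: min_r.
rewrite (big_setID U) /= (setIidPr UA) minU minAU.
have [U_ge2|U_le1] := leqP 2 #|U|.
  (* Above the truncation level each [a x] exceeds [c] by at most [d]. *)
  set d := Num.max 0 (z + beta - c).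
  have d_ge0 : 0 <= d by rewrite le_max lexx.
  have min_le : Num.min z (c - beta) <= z - d.
    by rewrite /d maxEle; case: ifP; rewrite ge_min => _; apply/orP; [right|left]; lra.
  have sumAU : \sum_(x in A :\: U) a x <= (c + d) *+ #|A :\: U|.
    rewrite -sumr_const; apply: ler_sum => x /setDP[xA _].
    have := a_le x xA; have : z + beta - c <= d by rewrite /d le_max lexx orbT.
    lra.
  have dAU : d *+ #|A :\: U| <= (t - 1)%:R * d.
    by rewrite mulr_natl; apply: (ler_wpMn2l d_ge0); rewrite cAU; lia.
  have := ler_wpM2l (ler0n R (t - 1)) min_le.
  move: sum_ge sumAU dAU; rewrite (big_setID U) /= (setIidPr UA) mulrnDl.
  clear; lra.
have sumU : (1 - t%:R * beta) *+ #|U| <= \sum_(x in U) a x.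
  by rewrite -sumr_const; apply: ler_sum => x /setIdP[xA _]; apply: a_ge.
have min_le : (t - 1)%:R * Num.min z (c - beta) <= (t - 1)%:R * (c - beta).
  by rewrite ler_wpM2l // ge_min lexx orbT.
have tR : (t - 1)%:R = t%:R - 1 :> R by rewrite natrB.
rewrite cAU t1R; move: sumU c_ge min_le; rewrite tR.
case: #|U| U_le1 => [|[|//]] _; rewrite ?subn0 ?subn1 ?mulr0n ?mulr1n -[c *+ _]mulr_natl ?t1R;
  clear; lra.
Qed.

Definition clique_bound (R : numFieldType) (beta D : R) (s t : nat) : R :=
  (1 - beta) * s%:R * 'C(s - 2, t - 1)%:R - (t - 1)%:R * 'C(s - 1, t)%:R
  + 'C(s - 2, t - 2)%:R * D.

Lemma clique_bound_id (R : numFieldType) (beta D : R) (s : nat) :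
  (2 <= s)%N -> clique_bound beta D s s = D.
Proof.
move=> s2; rewrite /clique_bound binn !bin_small; try lia.
by rewrite !mulr0 subrr add0r mul1r.
Qed.

Lemma clique_bound_rec (R : numFieldType) (beta D : R) (s t : nat) :
  (2 <= t)%N -> (t < s)%N ->
  (s - t)%:R * clique_bound beta D s t =
    'C(s, t.+1)%:R * (2 - t.+1%:R * beta) + (t - 1)%:R * clique_bound beta D s t.+1.
Proof.
move=> t2 ts; rewrite /clique_bound.
have [u tu] : exists u, t = u.+2 by exists (t - 2)%N; lia.
have [k sk] : exists k, s = (u + k).+3 by exists (s - t - 1)%N; lia.
subst t s.
have -> : ((u + k).+3 - u.+2 = k.+1)%N by lia.
rewrite !subSS !subn0.
move En : (u + k).+1 => n.
have r1 : (k.+1 * 'C(n, u) = u.+1 * 'C(n, u.+1))%N.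
  by rewrite mul_bin_left -En; congr (_ * _)%N; lia.
have r2 : (k * 'C(n, u.+1) = u.+2 * 'C(n, u.+2))%N.
  by rewrite mul_bin_left -En; congr (_ * _)%N; lia.
have r3 : (u.+3 * 'C(n, u.+3) + 'C(n, u.+2) = k * 'C(n, u.+2))%N.
  rewrite mul_bin_left; case: (posnP k) => [k0|k_gt0].
    by rewrite (bin_small (n := n)) ?muln0 // -En k0; lia.
  have -> : (n - u.+2 = k.-1)%N by rewrite -En; lia.
  by rewrite addnC -mulSn prednK.
rewrite (binS n.+1 u.+2) (binS n u.+1) (binS n u.+2).
move: r1 r2 r3; set a := 'C(n, u); set b := 'C(n, u.+1); set c := 'C(n, u.+2).
set d := 'C(n, u.+3) => r1 r2 r3.
have R1 : k.+1%:R * a%:R - u.+1%:R * b%:R = 0 :> R.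
  by apply/eqP; rewrite subr_eq0 -!natrM r1.
have R2 : k%:R * b%:R - u.+2%:R * c%:R = 0 :> R.
  by apply/eqP; rewrite subr_eq0 -!natrM r2.
have R3 : u.+3%:R * d%:R + c%:R - k%:R * c%:R = 0 :> R.
  by apply/eqP; rewrite subr_eq0 -!natrM -natrD r3.
apply/eqP; rewrite -subr_eq0; apply/eqP.
(* The difference of the two sides is this combination of the relations. *)
transitivity (D * (k.+1%:R * a%:R - u.+1%:R * b%:R)
  - beta * ((u%:R + k%:R + 4) * (k%:R * b%:R - u.+2%:R * c%:R)
             - (u.+3%:R * d%:R + c%:R - k%:R * c%:R))
  + (k%:R + 3) * (k%:R * b%:R - u.+2%:R * c%:R)
  + u%:R * (u.+3%:R * d%:R + c%:R - k%:R * c%:R)).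
  by rewrite -En; ring.
by rewrite R1 R2 R3; ring.
Qed.

Lemma ceil_inv_mul_ge1 (R : archiRealFieldType) (beta : R) (p : nat) :
  0 < beta -> p%:Z = Num.ceil beta^-1 - 1 -> 1 <= (p%:R + 1) * beta.
Proof.
move=> beta_gt0 p_ceil.
have inv_le : beta^-1 <= p%:R + 1.
  have := ceil_ge beta^-1.
  have -> : Num.ceil beta^-1 = p%:Z + 1 by rewrite p_ceil subrK.
  by rewrite rmorphD /= rmorph1.
by rewrite -[leLHS](mulVf (lt0r_neq0 beta_gt0)) ler_pM2r.
Qed.

Section Densities.
Variables (V : finType) (e : rel V) (R : realFieldType) (beta : R).
Hypotheses (e_sym : symmetric e) (e_irr : irreflexive e) (V_gt0 : (0 < #|V|)%N).
Hypothesis min_deg : forall v : V, (1 - beta) * #|V|%:R <= (vdeg e v)%:R.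

Lemma sum_nonnbrs_le (A : {set V}) :
  (\sum_(x in A) (#|V| - vdeg e x))%N%:R <= #|A|%:R * (beta * #|V|%:R).
Proof.
rewrite natr_sum mulr_natl -sumr_const; apply: ler_sum => x _.
by rewrite natrB ?max_card //; have := min_deg x; lra.
Qed.

Lemma Dn_ge (A : {set V}) : is_clique e A -> 1 - #|A|%:R * beta <= Dn e A.
Proof.
move=> Acl; rewrite /Dn ler_pdivlMr ?ltr0n //.
have := leq_order_cdeg e_sym e_irr Acl; rewrite -(ler_nat R) natrD.
have := sum_nonnbrs_le A; lra.
Qed.

Lemma Dn_setD1_le (S : {set V}) (x : V) :
  is_clique e S -> Dn e (S :\ x) <= Dn e S + beta.
Proof.
move=> Scl; have n_gt0 : 0 < #|V|%:R :> R by rewrite ltr0n.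
rewrite /Dn ler_pdivrMr // mulrDl divfK ?lt0r_neq0 //.
have := cdeg_setD1 e_sym e_irr x Scl; rewrite -(ler_nat R) natrD.
by have := sum_nonnbrs_le [set x]; rewrite big_set1 cards1 mul1r; lra.
Qed.

Lemma sum_Dn_setD1_ge (S : {set V}) : is_clique e S -> (2 <= #|S|)%N ->
  2 - #|S|%:R * beta + (#|S| - 2)%:R * Dn e S <= \sum_(x in S) Dn e (S :\ x).
Proof.
move=> Scl S2; have n_gt0 : 0 < #|V|%:R :> R by rewrite ltr0n.
rewrite /Dn -mulr_suml -natr_sum ler_pdivlMr // mulrDl -mulrA divfK ?lt0r_neq0 //.
have := sum_cdeg_setD1 e_sym e_irr Scl S2; rewrite -(ler_nat R) !natrD !natrM.
by have := sum_nonnbrs_le S; lra.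
Qed.

Variable p : nat.
Hypothesis beta_p : 1 <= (p%:R + 1) * beta.

Lemma Dminus_sum_facets_ge (t : nat) (S : {set V}) :
  (0 < t)%N -> S \in Kcl e t.+1 ->
  2 - t.+1%:R * beta + (t - 1)%:R * Dminus e p beta S
    <= \sum_(T in Kcl_in e t S) Dminus e p beta T.
Proof.
move=> t_gt0; rewrite inE => /andP[Scl /eqP cS].
set c := (p%:R - t%:R + 1) * beta.
have -> : Dminus e p beta S = Num.min (Dn e S) (c - beta).
  by rewrite /Dminus cS /c -addn1 natrD; congr (Num.min _ _); ring.
rewrite (sum_Kcl_in_setD1 _ Scl cS).
under eq_bigr => x xS do rewrite /Dminus (cardsD1_succ xS cS) -/c.
apply: sum_min_ge => //.
- by have := sum_Dn_setD1_ge Scl; rewrite cS subSS; apply.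
- by move=> x _; apply: Dn_setD1_le.
- by move=> x xS; rewrite -(cardsD1_succ xS cS) Dn_ge ?is_clique_setD1.
- by rewrite /c; move: beta_p; lra.
Qed.

Lemma Dminus_sum_Kcl_in_ge (s t : nat) (S : {set V}) :
  (2 <= t)%N -> (t <= s)%N -> S \in Kcl e s ->
  clique_bound beta (Dminus e p beta S) s t
    <= \sum_(T in Kcl_in e t S) Dminus e p beta T.
Proof.
move=> t2 ts SK; move: (SK); rewrite inE => /andP[Scl /eqP cS].
have [k sk] : exists k, s = (t + k)%N by exists (s - t)%N; lia.
elim: k t t2 ts sk => [|k IH] t t2 ts sk.
  rewrite addn0 in sk; subst t.
  by rewrite clique_bound_id // -cS Kcl_in_id // big_set1.
have st_gt0 : 0 < (s - t)%:R :> R by rewrite ltr0n; lia.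
have facets : \sum_(U in Kcl_in e t.+1 S)
      (2 - t.+1%:R * beta + (t - 1)%:R * Dminus e p beta U)
    <= \sum_(U in Kcl_in e t.+1 S) \sum_(T in Kcl_in e t U) Dminus e p beta T.
  apply: ler_sum => U /setIdP[UK _]; apply: Dminus_sum_facets_ge => //; lia.
rewrite big_split /= sumr_const -mulr_sumr (card_Kcl_in _ Scl) in facets.
rewrite double_count_Kcl_in // cS in facets.
rewrite -(ler_pM2l st_gt0) clique_bound_rec; try lia.
have IHt : clique_bound beta (Dminus e p beta S) s t.+1
    <= \sum_(U in Kcl_in e t.+1 S) Dminus e p beta U by apply: IH; lia.
have := ler_wpM2l (ler0n R (t - 1)) IHt.
move: facets; rewrite -[_ *+ 'C(_, _)]mulr_natr -[_ *+ (s - t)]mulr_natr; lra.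
Qed.

End Densities.

Theorem mainTheorem11 (R : archiRealFieldType) (beta : R) (p : nat)
  (V : finType) (e : rel V) :
  0 < beta -> beta < 1 ->
  (p%:Z = Num.ceil (beta^-1) - 1)%R ->
  simple_graph e ->
  (* the minimum degree of G is (1 - beta) n, n = |V(G)| *)
  (forall v : V, (1 - beta) * (#|V|)%:R <= (vdeg e v)%:R) ->
  (exists v : V, (vdeg e v)%:R = (1 - beta) * (#|V|)%:R) ->
  (forall s t : nat, (2 <= t)%N -> (t < s)%N -> (s <= p.+1)%N ->
     forall S : {set V}, S \in Kcl e s ->
       \sum_(T in Kcl_in e t S) Dminus e p beta T >=
         (1 - beta) * s%:R * ('C(s - 2, t - 1))%:R
         - (t - 1)%:R * ('C(s - 1, t))%:R
         + ('C(s - 2, t - 2))%:R * Dminus e p beta S)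
  /\
  (forall t : nat, (2 <= t)%N -> (t <= p)%N ->
     forall S : {set V}, S \in Kcl e t.+1 ->
       0 <= \sum_(T in Kcl_in e t S) Dminus e p beta T
            - (2 - (t.+1)%:R * beta + (t - 1)%:R * Dminus e p beta S)).
Proof.
move=> beta_gt0 _ p_ceil [e_sym e_irr] min_deg [v0 _].
have V_gt0 : (0 < #|V|)%N by apply/card_gt0P; exists v0.
have beta_p := ceil_inv_mul_ge1 beta_gt0 p_ceil.
split=> [s t t2 ts _ S SK | t t2 _ S SK].
  by have := Dminus_sum_Kcl_in_ge e_sym e_irr V_gt0 min_deg beta_p t2 (ltnW ts) SK.
rewrite subr_ge0.
by have := Dminus_sum_facets_ge e_sym e_irr V_gt0 min_deg beta_p (ltnW t2) SK.
Qed.
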